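(* Let $(I,\le)$ be a partially ordered set and $(B_i)_{i\in I}$ a partial Boolean algebra in which every $B_i$ is complete and $B_i\subseteq B_j$ for $i\le j$. Let $X=\bigcup_{i\in I}B_i$ be the associated complete orthomodular lattice and $Y=\{f:I\to X\mid f(i)\in B_i\ \forall i,\ f \text{ monotone}\}$ the associated complete Heyting algebra (ordered pointwise). Define $D:X\to Y$ by $D(x)(i)=x$ if $x\in B_i$ and $D(x)(i)=0$ if $x\notin B_i$. Then $D$ is injective and reflects the order: if $D(x)\le D(y)$ in $Y$, then $x\le y$ in $X$.
   Context: A partial Boolean algebra is a family $(B_i)_{i\in I}$ of Boolean algebras whose structure coincides on overlaps: all $B_i$ have the same least element $0$; for $x,y\in B_i\cap B_j$, $x\le_i y$ iff $x\le_j y$, $\neg_i x=\neg_j x$, $x\vee_i y=x\vee_j y$; if $x\le_i y$ and $y\le_j z$ then $x\le_k z$ for some $k$; and if $y\le_i\neg_i x$, $x\le_j z$, $y\le_k z$ then $x,y,z\in B_l$ for some $l$. The union $X=\bigcup_iB_i$ then carries the amalgamated structure ($x\le y$ iff $x\le_i y$ in some $B_i$ containing both, $x^\perp=\neg_i x$, etc.), making it an orthomodular lattice. *)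

From Stdlib Require Import ClassicalEpsilon.

Set Implicit Arguments.

Record is_boolean_algebra (X : Type) (S : X -> Prop) (le : X -> X -> Prop)
  (zero one : X) (join meet : X -> X -> X) (neg : X -> X) : Prop := {
  ba_zero_in : S zero;
  ba_one_in : S one;
  ba_join_in : forall x y, S x -> S y -> S (join x y);
  ba_meet_in : forall x y, S x -> S y -> S (meet x y);
  ba_neg_in : forall x, S x -> S (neg x);
  ba_refl : forall x, S x -> le x x;
  ba_antisym : forall x y, S x -> S y -> le x y -> le y x -> x = y;
  ba_trans : forall x y z, S x -> S y -> S z -> le x y -> le y z -> le x z;
  ba_zero_least : forall x, S x -> le zero x;
  ba_one_greatest : forall x, S x -> le x one;
  ba_join_ub_l : forall x y, S x -> S y -> le x (join x y);
  ba_join_ub_r : forall x y, S x -> S y -> le y (join x y);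
  ba_join_least : forall x y z, S x -> S y -> S z -> le x z -> le y z -> le (join x y) z;
  ba_meet_lb_l : forall x y, S x -> S y -> le (meet x y) x;
  ba_meet_lb_r : forall x y, S x -> S y -> le (meet x y) y;
  ba_meet_greatest : forall x y z, S x -> S y -> S z -> le z x -> le z y -> le z (meet x y);
  ba_distr : forall x y z, S x -> S y -> S z ->
    meet x (join y z) = join (meet x y) (meet x z);
  ba_compl_join : forall x, S x -> join x (neg x) = one;
  ba_compl_meet : forall x, S x -> meet x (neg x) = zero
}.

Definition is_complete (X : Type) (S : X -> Prop) (le : X -> X -> Prop) : Prop :=
  forall A : X -> Prop, (forall a, A a -> S a) ->
    exists s, S s /\ (forall a, A a -> le a s) /\
      (forall t, S t -> (forall a, A a -> le a t) -> le s t).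

Record partial_boolean_algebra (I X : Type) (B : I -> X -> Prop)
  (le : I -> X -> X -> Prop) (zero : X) (one : I -> X)
  (join meet : I -> X -> X -> X) (neg : I -> X -> X) : Prop := {
  pba_ba : forall i, is_boolean_algebra (B i) (le i) zero (one i) (join i) (meet i) (neg i);
  pba_le_coh : forall i j x y, B i x -> B i y -> B j x -> B j y -> (le i x y <-> le j x y);
  pba_neg_coh : forall i j x, B i x -> B j x -> neg i x = neg j x;
  pba_join_coh : forall i j x y, B i x -> B i y -> B j x -> B j y -> join i x y = join j x y;
  pba_trans : forall i j x y z, B i x -> B i y -> B j y -> B j z ->
    le i x y -> le j y z -> exists k, B k x /\ B k z /\ le k x z;
  pba_orth : forall i j k x y z, B i x -> B i y -> B j x -> B j z -> B k y -> B k z ->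
    le i y (neg i x) -> le j x z -> le k y z -> exists l, B l x /\ B l y /\ B l z
}.

Definition leX (I X : Type) (B : I -> X -> Prop) (le : I -> X -> X -> Prop)
  (x y : X) : Prop := exists i, B i x /\ B i y /\ le i x y.

Definition inY (I X : Type) (leI : I -> I -> Prop) (B : I -> X -> Prop)
  (le : I -> X -> X -> Prop) (f : I -> X) : Prop :=
  (forall i, B i (f i)) /\ (forall i j, leI i j -> le j (f i) (f j)).

Definition leY (I X : Type) (le : I -> X -> X -> Prop) (f g : I -> X) : Prop :=
  forall i, le i (f i) (g i).

Definition Dmap (I X : Type) (B : I -> X -> Prop) (zero : X) (x : X) : I -> X :=
  fun i => if excluded_middle_informative (B i x) then x else zero.

(* Both claims are checked at a single index [i] with [x] in [B i]: there
   [D x i = x], while [D y i] is either [y] or the common bottom [0]. In the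
   degenerate case [x] is forced to be [0], and [0] lies below everything and
   is recovered from [D] because every element lies in some [B j]. *)

From Stdlib Require Import ClassicalEpsilon.

Section DownwardMap.

Context {I X : Type} {B : I -> X -> Prop} {le : I -> X -> X -> Prop}.
Context {zero : X} {one : I -> X} {join meet : I -> X -> X -> X} {neg : I -> X -> X}.
Hypothesis HB : partial_boolean_algebra B le zero one join meet neg.

Let D := Dmap B zero.

Lemma Dmap_mem {x i} : B i x -> D x i = x.
Proof.
  intros Hx; unfold D, Dmap.
  destruct (excluded_middle_informative (B i x)); tauto.
Qed.

Lemma Dmap_nmem {x i} : ~ B i x -> D x i = zero.
Proof.
  intros Hx; unfold D, Dmap.
  destruct (excluded_middle_informative (B i x)); tauto.
Qed.

Lemma Dmap_in x i : B i (D x i).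
Proof.
  destruct (excluded_middle_informative (B i x)) as [Hx | Hx].
  - now rewrite Dmap_mem.
  - rewrite Dmap_nmem by exact Hx. exact (ba_zero_in (pba_ba HB i)).
Qed.

Lemma Dmap_zero i : D zero i = zero.
Proof. exact (Dmap_mem (ba_zero_in (pba_ba HB i))). Qed.

Lemma le_zero_eq {i x} : B i x -> le i x zero -> x = zero.
Proof.
  intros Hx Hle. pose proof (pba_ba HB i) as BA.
  exact (ba_antisym BA _ _ Hx (ba_zero_in BA) Hle (ba_zero_least BA _ Hx)).
Qed.

Lemma Dmap_inY {leI : I -> I -> Prop} :
  (forall i j x, leI i j -> B i x -> B j x) ->
  forall x, inY leI B le (D x).
Proof.
  intros Hmono x; split; [exact (Dmap_in x) |].
  intros i j Hij. pose proof (pba_ba HB j) as BA.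
  destruct (excluded_middle_informative (B i x)) as [Hx | Hx].
  - rewrite (Dmap_mem Hx), (Dmap_mem (Hmono _ _ _ Hij Hx)).
    exact (ba_refl BA _ (Hmono _ _ _ Hij Hx)).
  - rewrite (Dmap_nmem Hx). exact (ba_zero_least BA _ (Dmap_in x j)).
Qed.

Hypothesis Hcover : forall x : X, exists i, B i x.

Lemma Dmap_eq_zero x : D x = D zero -> x = zero.
Proof.
  intros E. destruct (Hcover x) as [j Hj].
  rewrite <- (Dmap_mem Hj), <- (Dmap_zero j). now rewrite E.
Qed.

Lemma leX_zero_l y : leX B le zero y.
Proof.
  destruct (Hcover y) as [j Hj]. pose proof (pba_ba HB j) as BA.
  exists j; split; [exact (ba_zero_in BA) | split; [exact Hj |]].
  exact (ba_zero_least BA _ Hj).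
Qed.

Lemma Dmap_inj x y : D x = D y -> x = y.
Proof.
  intros E. destruct (Hcover x) as [i Hi].
  pose proof (f_equal (fun f => f i) E) as Ei; simpl in Ei.
  rewrite (Dmap_mem Hi) in Ei.
  destruct (excluded_middle_informative (B i y)) as [Hy | Hy].
  - now rewrite (Dmap_mem Hy) in Ei.
  - rewrite (Dmap_nmem Hy) in Ei. subst x.
    symmetry. apply Dmap_eq_zero. now rewrite E.
Qed.

Lemma Dmap_le_reflect x y : leY le (D x) (D y) -> leX B le x y.
Proof.
  intros H. destruct (Hcover x) as [i Hi]. specialize (H i).
  rewrite (Dmap_mem Hi) in H.
  destruct (excluded_middle_informative (B i y)) as [Hy | Hy].
  - rewrite (Dmap_mem Hy) in H. now exists i.
  - rewrite (Dmap_nmem Hy) in H.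
    rewrite (le_zero_eq Hi H). exact (leX_zero_l y).
Qed.

End DownwardMap.

Theorem proposition21 (I X : Type) (leI : I -> I -> Prop)
  (B : I -> X -> Prop) (le : I -> X -> X -> Prop) (zero : X) (one : I -> X)
  (join meet : I -> X -> X -> X) (neg : I -> X -> X)
  (leI_refl : forall i, leI i i)
  (leI_antisym : forall i j, leI i j -> leI j i -> i = j)
  (leI_trans : forall i j k, leI i j -> leI j k -> leI i k)
  (HB : partial_boolean_algebra B le zero one join meet neg)
  (Hcompl : forall i, is_complete (B i) (le i))
  (Hmono : forall i j x, leI i j -> B i x -> B j x)
  (Hcover : forall x : X, exists i, B i x) :
  (forall x, inY leI B le (Dmap B zero x)) /\
  (forall x y, Dmap B zero x = Dmap B zero y -> x = y) /\
  (forall x y, leY le (Dmap B zero x) (Dmap B zero y) -> leX B le x y).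
Proof.
  split; [| split].
  - exact (Dmap_inY HB Hmono).
  - exact (Dmap_inj HB Hcover).
  - exact (Dmap_le_reflect HB Hcover).
Qed.
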